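(* Let $N$ be a $2$-step nilpotent Lie group with a left invariant Riemannian metric, with the notation of the context, and let $\gamma$ be a geodesic of $N$ through the identity $e$ with tangent vector $X+Z$ at $e$, $X\in\mathcal V$, $Z\in\mathcal Z$. If the Gauss map of $\gamma$ is harmonic at $e$, then $J(Z)X=0$, and consequently $\gamma$ is (a reparametrization of an open part of) the one-parameter subgroup $t\mapsto\exp(t(X+Z))$. In particular, a geodesic in $N$ whose Gauss map is harmonic at a single point is a left translation of a one-parameter subgroup.
   Context: $N$ is $2$-step nilpotent: its Lie algebra $\mathcal N$ satisfies $[\mathcal N,\mathcal N]\ne0$, $[[\mathcal N,\mathcal N],\mathcal N]=0$. $\langle\cdot,\cdot\rangle$ is the inner product on $\mathcal N$ defining the left invariant metric, $\mathcal Z$ is the center of $\mathcal N$, $\mathcal V$ its orthogonal complement, and for $Z\in\mathcal Z$ the skew-symmetric operator $J(Z):\mathcal V\to\mathcal V$ is defined by $\langle J(Z)X,Y\rangle=\langle[X,Y],Z\rangle$ for all $X,Y\in\mathcal V$. The Gauss map of a curve assigns to each point $p$ the line $dL_{p^{-1}}(T_p\gamma)\subset\mathcal N$ in the Grassmannian of lines in $\mathcal N$ with its standard orthogonally invariant metric; harmonic at a point means vanishing of the tension field there. *)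

From Stdlib Require Import Reals.
Open Scope R_scope.

(* Model: the Lie algebra N is R^n in coordinates ORTHONORMAL for the inner
   product <.,.>; vectors are functions nat -> R of which only the
   components i < n are meaningful. The bracket is given by structure
   constants c i j k : [e_i, e_j] = sum_k c i j k e_k. *)
Definition vec := nat -> R.

Fixpoint rsum (n : nat) (f : nat -> R) : R :=
  match n with O => 0 | S k => rsum k f + f k end.

Definition vadd (x y : vec) : vec := fun i => x i + y i.
Definition vsub (x y : vec) : vec := fun i => x i - y i.
Definition vscale (a : R) (x : vec) : vec := fun i => a * x i.
Definition basis (j : nat) : vec := fun i => if Nat.eq_dec i j then 1 else 0.

Definition dot (n : nat) (x y : vec) : R := rsum n (fun i => x i * y i).
Definition vnorm (n : nat) (x : vec) : R := sqrt (dot n x x).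

Definition veq (n : nat) (x y : vec) : Prop := forall i, (i < n)%nat -> x i = y i.

Definition bracket (n : nat) (c : nat -> nat -> nat -> R) (x y : vec) : vec :=
  fun k => rsum n (fun i => rsum n (fun j => c i j k * x i * y j)).

(* N is a (real) Lie algebra (antisymmetric bracket; Jacobi is automatic for
   2-step nilpotent brackets) which is 2-step nilpotent. *)
Definition two_step_nilpotent (n : nat) (c : nat -> nat -> nat -> R) : Prop :=
  (forall i j k, (i < n)%nat -> (j < n)%nat -> (k < n)%nat -> c i j k = - c j i k) /\
  (forall x y w, veq n (bracket n c (bracket n c x y) w) (fun _ => 0)) /\
  (exists x y, ~ veq n (bracket n c x y) (fun _ => 0)).

Definition in_center (n : nat) c (z : vec) : Prop :=
  forall y, veq n (bracket n c z y) (fun _ => 0).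
Definition in_V (n : nat) c (x : vec) : Prop :=
  forall z, in_center n c z -> dot n x z = 0.

(* J(Z)X defined by <J(Z)X, Y> = <[X,Y], Z> : its j-th coordinate is
   <[X, e_j], Z>. *)
Definition Jmap (n : nat) c (z x : vec) : vec :=
  fun j => dot n (bracket n c x (basis j)) z.

(* The (simply connected) group N: the underlying space of the Lie algebra
   with the Baker-Campbell-Hausdorff product; exp is the identity map and e = 0. *)
Definition gmul (n : nat) c (p q : vec) : vec :=
  vadd (vadd p q) (vscale (1/2) (bracket n c p q)).

Definition dLinv (n : nat) c (p v : vec) : vec :=
  vsub v (vscale (1/2) (bracket n c p v)).

(* Levi-Civita connection on left invariant fields (Koszul formula):
   <nabla_x y, w> = 1/2 (<[x,y],w> - <[y,w],x> + <[w,x],y>). *)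
Definition nabla (n : nat) c (x y : vec) : vec :=
  fun k => / 2 * (dot n (bracket n c x y) (basis k)
                  - dot n (bracket n c y (basis k)) x
                  + dot n (bracket n c (basis k) x) y).

Definition vderiv (n : nat) (f : R -> vec) (t : R) (df : vec) : Prop :=
  forall i, (i < n)%nat -> derivable_pt_lim (fun s => f s i) t (df i).

Definition lvel (n : nat) c (g dg : R -> vec) (t : R) : vec :=
  dLinv n c (g t) (dg t).

(* gamma : (a,b) -> N is a geodesic with velocity dg: the covariant
   derivative of gamma' along gamma, written in a left invariant orthonormal
   frame, W' + nabla_W W, vanishes. *)
Definition is_geodesic (n : nat) c (g dg : R -> vec) (a b : R) : Prop :=
  (forall t, a < t < b -> vderiv n g t (dg t)) /\
  exists dW : R -> vec,
    forall t, a < t < b ->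
      vderiv n (lvel n c g dg) t (dW t) /\
      veq n (vadd (dW t) (nabla n c (lvel n c g dg t) (lvel n c g dg t))) (fun _ => 0).

(* Gauss map t |-> line R.W(t) in the Grassmannian of lines G_1(N) = RP^{n-1}
   with its O(n)-invariant metric. Locally it lifts isometrically (up to a
   constant factor, irrelevant for the tension) to u = W/|W| in the unit
   sphere. The domain carries the metric induced by N, i.e. |W(t)|^2 dt^2,
   so the tension field is
     tau = (1/|W|) D_t ( u'/|W| ),
   D_t being the tangential part of the ordinary derivative on the sphere. *)
Definition gauss_harmonic_at (n : nat) c (g dg : R -> vec) (t0 : R) : Prop :=
  let sp := fun t => vnorm n (lvel n c g dg t) in
  let u := fun t => vscale (/ sp t) (lvel n c g dg t) in
  exists (du : R -> vec) (dw : vec),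
    (exists d, 0 < d /\ forall t, Rabs (t - t0) < d -> vderiv n u t (du t)) /\
    vderiv n (fun t => vscale (/ sp t) (du t)) t0 dw /\
    let acc := vscale (/ sp t0) dw in
    veq n (vsub acc (vscale (dot n acc (u t0)) (u t0))) (fun _ => 0).

From Stdlib Require Import Reals Lra Lia FunctionalExtensionality.
Open Scope R_scope.

(* Write W(t) = dL_{gamma(t)^{-1}} gamma'(t) for the left-translated velocity
   of a geodesic and V0 = W(t0).  The Euler-Arnold form of the geodesic
   equation in a 2-step nilpotent group is  W'_i = <[W, e_i], W>.  Since
   brackets are central, pairing with a central vector shows that the central
   component of W is conserved, so the right-hand side equals <[W, e_i], V0>:
   the left-translated velocity solves the LINEAR equation W' = J(V0) W, with
   J(V0) skew-symmetric.  Hence |W| is constant, the Gauss map is u = W/|W|,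
   and harmonicity at t0 says that J(V0)^2 V0 is parallel to V0.  A purely
   algebraic argument then gives J(V0) V0 = 0, so (skewness again) W is
   constant, and a curve with constant left-translated velocity V0 is
   t |-> gamma(t0) exp((t - t0) V0).  Finally, at the identity V0 = X + Z and
   J(X+Z)(X+Z) = J(Z)X when X is in V and Z is central. *)

Lemma rsum_ext n f g : (forall i, (i < n)%nat -> f i = g i) -> rsum n f = rsum n g.
Proof.
  induction n as [|n IH]; intros H; simpl; [reflexivity|].
  rewrite IH, H; [reflexivity|lia|intros; apply H; lia].
Qed.

Lemma rsum_plus n f g : rsum n (fun i => f i + g i) = rsum n f + rsum n g.
Proof. induction n as [|n IH]; simpl; [ring|rewrite IH; ring]. Qed.

Lemma rsum_scal n a f : rsum n (fun i => a * f i) = a * rsum n f.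
Proof. induction n as [|n IH]; simpl; [ring|rewrite IH; ring]. Qed.

Lemma rsum_opp n f : rsum n (fun i => - f i) = - rsum n f.
Proof. induction n as [|n IH]; simpl; [ring|rewrite IH; ring]. Qed.

Lemma rsum_zero n f : (forall i, (i < n)%nat -> f i = 0) -> rsum n f = 0.
Proof.
  induction n as [|n IH]; intros H; simpl; [reflexivity|].
  rewrite IH, H; [ring|lia|intros; apply H; lia].
Qed.

Lemma rsum_swap n m (f : nat -> nat -> R) :
  rsum n (fun i => rsum m (fun j => f i j)) = rsum m (fun j => rsum n (fun i => f i j)).
Proof.
  induction n as [|n IH]; simpl.
  - symmetry; apply rsum_zero; reflexivity.
  - rewrite IH, <- rsum_plus. reflexivity.
Qed.

Lemma rsum_basis n k f : (k < n)%nat -> rsum n (fun i => basis k i * f i) = f k.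
Proof.
  induction n as [|n IH]; intros Hk; [lia|]. simpl. unfold basis at 2.
  destruct (Nat.eq_dec k n) as [->|Hne].
  - rewrite rsum_zero; [destruct (Nat.eq_dec n n); [ring|tauto]|].
    intros i Hi. unfold basis. destruct (Nat.eq_dec i n); [lia|ring].
  - rewrite IH by lia. destruct (Nat.eq_dec n k); [lia|ring].
Qed.

Lemma rsum_nonneg n f : (forall i, (i < n)%nat -> 0 <= f i) -> 0 <= rsum n f.
Proof.
  induction n as [|n IH]; intros H; simpl; [lra|].
  assert (0 <= rsum n f) by (apply IH; intros; apply H; lia).
  assert (0 <= f n) by (apply H; lia). lra.
Qed.

Lemma rsum_nonneg_zero n f : (forall i, (i < n)%nat -> 0 <= f i) -> rsum n f = 0 ->
  forall i, (i < n)%nat -> f i = 0.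
Proof.
  induction n as [|n IH]; intros H Hs i Hi; [lia|]. simpl in Hs.
  assert (0 <= rsum n f) by (apply rsum_nonneg; intros; apply H; lia).
  assert (0 <= f n) by (apply H; lia).
  destruct (Nat.eq_dec i n) as [->|]; [lra|].
  apply IH; [intros; apply H; lia|lra|lia].
Qed.

Lemma dot_ext n x x' y y' : veq n x x' -> veq n y y' -> dot n x y = dot n x' y'.
Proof. intros Hx Hy. apply rsum_ext. intros i Hi. rewrite Hx, Hy by exact Hi. reflexivity. Qed.

Lemma dot_comm n x y : dot n x y = dot n y x.
Proof. apply rsum_ext. intros; ring. Qed.

Lemma dot_basis n v k : (k < n)%nat -> dot n v (basis k) = v k.
Proof. intros Hk. rewrite <- (rsum_basis n k v Hk). apply rsum_ext; intros; ring. Qed.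

Lemma dot_zero_l n x y : veq n x (fun _ => 0) -> dot n x y = 0.
Proof. intros H. apply rsum_zero. intros i Hi. rewrite H by exact Hi. ring. Qed.

Lemma dot_lin_l n a b x y z :
  dot n (fun k => a * x k + b * y k) z = a * dot n x z + b * dot n y z.
Proof. unfold dot. rewrite <- !rsum_scal, <- rsum_plus. apply rsum_ext; intros; ring. Qed.

Lemma dot_scale n p q x y : dot n (vscale p x) (vscale q y) = p * q * dot n x y.
Proof. unfold dot, vscale. rewrite <- rsum_scal. apply rsum_ext; intros; ring. Qed.

Lemma dot_rsum_l n m (x : nat -> R) (F : nat -> vec) z :
  dot n (fun k => rsum m (fun i => x i * F i k)) z = rsum m (fun i => x i * dot n (F i) z).
Proof.
  unfold dot. rewrite (rsum_ext n _ (fun k => rsum m (fun i => x i * F i k * z k))).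
  - rewrite rsum_swap. apply rsum_ext. intros i _. rewrite <- rsum_scal.
    apply rsum_ext; intros; ring.
  - intros k _. rewrite (Rmult_comm _ (z k)), <- rsum_scal. apply rsum_ext; intros; ring.
Qed.

Lemma dot_self_zero n x : dot n x x = 0 -> veq n x (fun _ => 0).
Proof.
  intros H i Hi.
  assert (x i * x i = 0) by (apply (rsum_nonneg_zero n (fun i => x i * x i)); auto;
                             intros; apply Rle_0_sqr).
  nra.
Qed.

Lemma vnorm_pos n x : ~ veq n x (fun _ => 0) -> 0 < vnorm n x.
Proof.
  intros Hx. apply sqrt_lt_R0.
  assert (0 <= dot n x x) by (apply rsum_nonneg; intros; apply Rle_0_sqr).
  destruct (Req_dec (dot n x x) 0) as [E|]; [|lra].
  exfalso. exact (Hx (dot_self_zero n x E)).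
Qed.

Section Bracket.
Variables (n : nat) (c : nat -> nat -> nat -> R).

Lemma bracket_ext x x' y y' : veq n x x' -> veq n y y' -> bracket n c x y = bracket n c x' y'.
Proof.
  intros Hx Hy. extensionality k. apply rsum_ext; intros i Hi.
  apply rsum_ext; intros j Hj. rewrite Hx, Hy by assumption. reflexivity.
Qed.

Lemma bracket_lin_l a b x y w k :
  bracket n c (fun i => a * x i + b * y i) w k = a * bracket n c x w k + b * bracket n c y w k.
Proof.
  unfold bracket. rewrite <- !rsum_scal, <- rsum_plus. apply rsum_ext; intros i _.
  rewrite <- !rsum_scal, <- rsum_plus. apply rsum_ext; intros; ring.
Qed.

Lemma bracket_lin_r a b x y w k :
  bracket n c w (fun i => a * x i + b * y i) k = a * bracket n c w x k + b * bracket n c w y k.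
Proof.
  unfold bracket. rewrite <- !rsum_scal, <- rsum_plus. apply rsum_ext; intros i _.
  rewrite <- !rsum_scal, <- rsum_plus. apply rsum_ext; intros; ring.
Qed.

Lemma bracket_scale_r p x y k : bracket n c x (vscale p y) k = p * bracket n c x y k.
Proof.
  rewrite (bracket_ext x x (vscale p y) (fun i => p * y i + 0 * y i))
    by (intros ? ?; unfold vscale; ring).
  rewrite bracket_lin_r. ring.
Qed.

Lemma bracket_zero_l x y : veq n x (fun _ => 0) -> bracket n c x y = fun _ => 0.
Proof.
  intros H. extensionality k. apply rsum_zero. intros i Hi.
  apply rsum_zero. intros j Hj. rewrite H by exact Hi. ring.
Qed.

Lemma bracket_basis_l i y k : (i < n)%nat ->
  bracket n c (basis i) y k = rsum n (fun j => c i j k * y j).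
Proof.
  intros Hi. unfold bracket.
  rewrite <- (rsum_basis n i (fun i' => rsum n (fun j => c i' j k * y j)) Hi).
  apply rsum_ext; intros i' _. rewrite <- rsum_scal. apply rsum_ext; intros; ring.
Qed.

Lemma bracket_basis_r x j k : (j < n)%nat ->
  bracket n c x (basis j) k = rsum n (fun i => c i j k * x i).
Proof.
  intros Hj. unfold bracket. apply rsum_ext; intros i _.
  rewrite <- (rsum_basis n j (fun j' => c i j' k * x i) Hj). apply rsum_ext; intros; ring.
Qed.

Lemma bracket_expand_l x y k :
  bracket n c x y k = rsum n (fun i => x i * bracket n c (basis i) y k).
Proof.
  rewrite (rsum_ext n _ (fun i => x i * rsum n (fun j => c i j k * y j)))
    by (intros; rewrite bracket_basis_l; auto).
  unfold bracket. apply rsum_ext; intros i _. rewrite <- rsum_scal. apply rsum_ext; intros; ring.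
Qed.

Lemma bracket_expand_r x y k :
  bracket n c x y k = rsum n (fun j => y j * bracket n c x (basis j) k).
Proof.
  rewrite (rsum_ext n _ (fun j => y j * rsum n (fun i => c i j k * x i)))
    by (intros; rewrite bracket_basis_r; auto).
  unfold bracket. rewrite rsum_swap. apply rsum_ext; intros i _.
  rewrite <- rsum_scal. apply rsum_ext; intros; ring.
Qed.

Lemma dot_bracket_expand x y z :
  dot n (bracket n c x y) z = rsum n (fun i => x i * dot n (bracket n c (basis i) y) z).
Proof.
  rewrite <- dot_rsum_l. apply dot_ext; [|intros ? ?; reflexivity].
  intros k _. apply bracket_expand_l.
Qed.

Hypothesis Hanti : forall i j k, (i < n)%nat -> (j < n)%nat -> (k < n)%nat -> c i j k = - c j i k.

Lemma bracket_anti x y k : (k < n)%nat -> bracket n c x y k = - bracket n c y x k.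
Proof.
  intros Hk. unfold bracket. rewrite rsum_swap, <- rsum_opp. apply rsum_ext; intros j Hj.
  rewrite <- rsum_opp. apply rsum_ext; intros i Hi. rewrite Hanti by assumption. ring.
Qed.

Lemma bracket_self x : veq n (bracket n c x x) (fun _ => 0).
Proof. intros k Hk. assert (H := bracket_anti x x k Hk). lra. Qed.

Lemma dot_bracket_anti x y z : dot n (bracket n c y x) z = - dot n (bracket n c x y) z.
Proof.
  unfold dot. rewrite <- rsum_opp. apply rsum_ext; intros k Hk.
  rewrite bracket_anti by exact Hk. ring.
Qed.

Lemma nabla_self x i : (i < n)%nat -> nabla n c x x i = dot n (bracket n c (basis i) x) x.
Proof.
  intros Hi. unfold nabla. rewrite dot_basis, bracket_self, dot_bracket_anti by exact Hi.
  field.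
Qed.

Hypothesis Hcent : forall x y, in_center n c (bracket n c x y).

Lemma bracket_center_r y z : in_center n c z -> veq n (bracket n c y z) (fun _ => 0).
Proof. intros Hz k Hk. rewrite bracket_anti, Hz by exact Hk. ring. Qed.

Lemma dLinv_solve p v w :
  veq n (dLinv n c p v) w -> veq n v (vadd w (vscale (1/2) (bracket n c p w))).
Proof.
  intros H.
  assert (Hv : veq n v (fun i => 1 * w i + 1/2 * bracket n c p v i)).
  { intros i Hi. rewrite <- (H i Hi). unfold dLinv, vsub, vscale. ring. }
  assert (Hpv : veq n (bracket n c p v) (bracket n c p w)).
  { intros k Hk. rewrite (bracket_ext p p v _ (fun _ _ => eq_refl) Hv), bracket_lin_r.
    rewrite (bracket_center_r p _ (Hcent p v) k Hk). ring. }
  intros i Hi. rewrite Hv, Hpv by exact Hi. unfold vadd, vscale. ring.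
Qed.

Lemma dLinv_kernel p v : veq n (dLinv n c p v) (fun _ => 0) -> veq n v (fun _ => 0).
Proof.
  intros H i Hi. rewrite (dLinv_solve p v _ H i Hi). unfold vadd, vscale.
  assert (H0 : in_center n c (fun _ => 0)).
  { intros y k _. rewrite bracket_zero_l; [reflexivity|intros ? ?; reflexivity]. }
  rewrite (bracket_center_r p _ H0 i Hi). ring.
Qed.

End Bracket.

Lemma zero_derivative_const (f : R -> R) a b t0 : a < t0 < b ->
  (forall t, a < t < b -> derivable_pt_lim f t 0) ->
  forall t, a < t < b -> f t = f t0.
Proof.
  intros Ht0 H t Ht.
  set (lo := Rmin t t0). set (hi := Rmax t t0).
  assert (Hin : forall x, lo <= x <= hi -> a < x < b).
  { intros x Hx. unfold lo, hi, Rmin, Rmax in Hx. destruct (Rle_dec t t0); lra. }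
  assert (pr : forall x, lo < x < hi -> derivable_pt f x).
  { intros x Hx. exists 0. apply H, Hin; lra. }
  assert (K : constant_D_eq f (fun x => lo <= x <= hi) (f lo)).
  { apply (null_derivative_loc f lo hi pr).
    - intros x Hx. apply derivable_continuous_pt. exists 0. apply H, Hin; lra.
    - intros x Hx. destruct (pr x Hx) as [l Hl]. simpl.
      apply (uniqueness_limite f x); [exact Hl|apply H, Hin; lra]. }
  assert (lo <= t <= hi /\ lo <= t0 <= hi) as [A1 A2].
  { unfold lo, hi, Rmin, Rmax; destruct (Rle_dec t t0); lra. }
  rewrite (K t A1), (K t0 A2). reflexivity.
Qed.

Lemma interval_nbhd a b t : a < t < b ->
  exists r, 0 < r /\ forall y, Rabs (y - t) < r -> a < y < b.
Proof.
  intros Ht. exists (Rmin (t - a) (b - t)). split; [apply Rmin_pos; lra|].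
  intros y Hy. apply Rabs_def2 in Hy.
  assert (Rmin (t - a) (b - t) <= t - a) by apply Rmin_l.
  assert (Rmin (t - a) (b - t) <= b - t) by apply Rmin_r. lra.
Qed.

Lemma deriv_local f h x l d : 0 < d -> (forall y, Rabs (y - x) < d -> f y = h y) ->
  derivable_pt_lim h x l -> derivable_pt_lim f x l.
Proof.
  intros hd Heq Hh eps heps.
  destruct (Hh eps heps) as [del Hdel].
  assert (hm : 0 < Rmin del d) by (apply Rmin_pos; [apply cond_pos|exact hd]).
  exists (mkposreal _ hm). intros k hk0 hk. simpl in hk.
  rewrite (Heq (x + k)), (Heq x).
  - apply Hdel; [exact hk0|]. apply Rlt_le_trans with (1 := hk), Rmin_l.
  - rewrite Rminus_diag, Rabs_R0. exact hd.
  - replace (x + k - x) with k by ring. apply Rlt_le_trans with (1 := hk), Rmin_r.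
Qed.

Lemma deriv_eq f x l l' : derivable_pt_lim f x l -> l = l' -> derivable_pt_lim f x l'.
Proof. intros H ->; exact H. Qed.

Lemma vderiv_unique_near n f h t df dh d : 0 < d ->
  (forall y, Rabs (y - t) < d -> veq n (f y) (h y)) ->
  vderiv n f t df -> vderiv n h t dh -> veq n df dh.
Proof.
  intros hd Heq Hf Hh i Hi.
  apply (uniqueness_limite (fun s => f s i) t); [exact (Hf i Hi)|].
  apply (deriv_local _ (fun s => h s i) t _ d hd); [|exact (Hh i Hi)].
  intros y Hy. exact (Heq y Hy i Hi).
Qed.

Lemma vderiv_veq n f t df df' : vderiv n f t df -> veq n df df' -> vderiv n f t df'.
Proof. intros H E i Hi. rewrite <- (E i Hi). exact (H i Hi). Qed.

Lemma vderiv_scale n k f t df : vderiv n f t df ->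
  vderiv n (fun s => vscale k (f s)) t (vscale k df).
Proof. intros H i Hi. exact (derivable_pt_lim_scal _ k t _ (H i Hi)). Qed.

Lemma deriv_dot n k f t df : vderiv n f t df ->
  derivable_pt_lim (fun s => dot n k (f s)) t (dot n k df).
Proof.
  intros H. unfold dot. clear - H.
  induction n as [|n IH]; simpl.
  - apply derivable_pt_lim_const.
  - apply (derivable_pt_lim_plus (fun s => rsum n (fun i => k i * f s i)) (fun s => k n * f s n)).
    + apply IH. intros i Hi. apply H; lia.
    + apply derivable_pt_lim_scal, H; lia.
Qed.

Lemma deriv_sqdist n f t df A : vderiv n f t df ->
  derivable_pt_lim (fun s => dot n (vsub (f s) A) (vsub (f s) A)) t
    (2 * dot n df (vsub (f t) A)).
Proof.
  intros H. unfold dot. rewrite <- rsum_scal. clear - H.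
  induction n as [|n IH]; simpl.
  - apply derivable_pt_lim_const.
  - apply (derivable_pt_lim_plus (fun s => rsum n (fun i => vsub (f s) A i * vsub (f s) A i))
                                 (fun s => vsub (f s) A n * vsub (f s) A n)).
    + apply IH. intros i Hi. apply H; lia.
    + assert (Hn : derivable_pt_lim (fun s => vsub (f s) A n) t (df n - 0)).
      { apply (derivable_pt_lim_minus (fun s => f s n) (fct_cte (A n))).
        - apply H; lia.
        - apply derivable_pt_lim_const. }
      eapply deriv_eq; [apply (derivable_pt_lim_mult _ _ t _ _ Hn Hn)|]. unfold vsub. ring.
Qed.

Lemma sqdist_const n f df a b t0 A : a < t0 < b ->
  (forall t, a < t < b -> vderiv n f t (df t)) ->
  (forall t, a < t < b -> dot n (df t) (vsub (f t) A) = 0) ->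
  forall t, a < t < b ->
    dot n (vsub (f t) A) (vsub (f t) A) = dot n (vsub (f t0) A) (vsub (f t0) A).
Proof.
  intros Ht0 Hf Horth.
  apply (zero_derivative_const (fun s => dot n (vsub (f s) A) (vsub (f s) A)) a b t0 Ht0).
  intros t Ht. eapply deriv_eq; [apply deriv_sqdist, Hf, Ht|]. rewrite Horth by exact Ht. ring.
Qed.

Lemma Jmap_ext n c z z' x x' : veq n z z' -> veq n x x' -> Jmap n c z x = Jmap n c z' x'.
Proof.
  intros Hz Hx. extensionality j. unfold Jmap.
  rewrite (bracket_ext n c x x' (basis j) (basis j) Hx (fun _ _ => eq_refl)).
  apply dot_ext; [intros ? ?; reflexivity|exact Hz].
Qed.

Section J.
Variables (n : nat) (c : nat -> nat -> nat -> R).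
Hypothesis Hanti : forall i j k, (i < n)%nat -> (j < n)%nat -> (k < n)%nat -> c i j k = - c j i k.
Hypothesis Hcent : forall x y, in_center n c (bracket n c x y).
Variable z : vec.

Lemma Jmap_lin p q x y j :
  Jmap n c z (fun i => p * x i + q * y i) j = p * Jmap n c z x j + q * Jmap n c z y j.
Proof.
  unfold Jmap. rewrite <- dot_lin_l. apply dot_ext; [|intros ? ?; reflexivity].
  intros k _. apply bracket_lin_l.
Qed.

Lemma dot_Jmap x y : dot n (Jmap n c z x) y = dot n (bracket n c x y) z.
Proof.
  rewrite (dot_ext n (bracket n c x y)
             (fun k => rsum n (fun j => y j * bracket n c x (basis j) k)) z z),
    dot_rsum_l; [|intros k _; apply bracket_expand_r|intros ? ?; reflexivity].
  apply rsum_ext; intros j _. apply Rmult_comm.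
Qed.

Lemma Jmap_skew x y : dot n (Jmap n c z x) y = - dot n x (Jmap n c z y).
Proof. rewrite (dot_comm n x), !dot_Jmap, (dot_bracket_anti n c Hanti). ring. Qed.

Lemma Jmap_self x : dot n (Jmap n c z x) x = 0.
Proof. assert (H := Jmap_skew x x). rewrite dot_comm in H |- *. lra. Qed.

Lemma Jmap_center x w : in_center n c w -> dot n (Jmap n c z x) w = 0.
Proof.
  intros Hw. rewrite dot_Jmap.
  apply dot_zero_l, (bracket_center_r n c Hanti); exact Hw.
Qed.

Lemma vderiv_Jmap f t df : vderiv n f t df ->
  vderiv n (fun s => Jmap n c z (f s)) t (Jmap n c z df).
Proof.
  intros H j Hj.
  assert (E : forall x, Jmap n c z x j = dot n (fun i => Jmap n c z (basis i) j) x).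
  { intros x. unfold Jmap at 1. rewrite dot_bracket_expand, dot_comm. reflexivity. }
  rewrite E. apply (derivable_pt_lim_ext (fun s => dot n (fun i => Jmap n c z (basis i) j) (f s))).
  - intros s. symmetry. apply E.
  - apply deriv_dot, H.
Qed.

(* Pairing with the central vectors
   [z, e_k] gives mu J(z)z = 0, and pairing with z gives
   mu |z|^2 = -|J(z)z|^2; either way J(z)z = 0. *)
Lemma Jmap_square_parallel mu :
  veq n (Jmap n c z (Jmap n c z z)) (vscale mu z) -> veq n (Jmap n c z z) (fun _ => 0).
Proof.
  intros H.
  assert (Hmu : forall k, (k < n)%nat -> mu * Jmap n c z z k = 0).
  { intros k Hk.
    transitivity (dot n (bracket n c z (basis k)) (vscale mu z)).
    { unfold Jmap, dot, vscale. rewrite <- rsum_scal. apply rsum_ext; intros; ring. }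
    rewrite <- (dot_ext n _ _ _ _ (fun _ _ => eq_refl) H), dot_comm.
    apply Jmap_center, Hcent. }
  assert (Hnorm : mu * dot n z z = - dot n (Jmap n c z z) (Jmap n c z z)).
  { rewrite <- Jmap_skew, (dot_ext n _ _ z z H (fun _ _ => eq_refl)).
    unfold dot, vscale. rewrite <- rsum_scal. apply rsum_ext; intros; ring. }
  destruct (Req_dec mu 0) as [Hmu0|Hmu0].
  - apply dot_self_zero. rewrite Hmu0 in Hnorm. lra.
  - intros k Hk. destruct (Rmult_integral _ _ (Hmu k Hk)); [contradiction|assumption].
Qed.

End J.

Lemma Jmap_V_plus_center n c X Z :
  (forall x y, in_center n c (bracket n c x y)) -> in_V n c X -> in_center n c Z ->
  forall j, (j < n)%nat -> Jmap n c (vadd X Z) (vadd X Z) j = Jmap n c Z X j.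
Proof.
  intros Hcent HX HZ j Hj. unfold Jmap.
  assert (Hsum : veq n (vadd X Z) (fun i => 1 * X i + 1 * Z i))
    by (intros ? ?; unfold vadd; ring).
  assert (Hb : veq n (bracket n c (vadd X Z) (basis j)) (bracket n c X (basis j))).
  { intros k Hk. rewrite (bracket_ext n c _ _ (basis j) (basis j) Hsum (fun _ _ => eq_refl)).
    rewrite bracket_lin_l, (HZ (basis j) k Hk). ring. }
  rewrite (dot_ext n _ _ _ _ Hb Hsum), dot_comm, dot_lin_l, (HX _ (Hcent _ _)), dot_comm.
  ring.
Qed.

Section Geodesic.
Variables (n : nat) (c : nat -> nat -> nat -> R).
Hypothesis Hanti : forall i j k, (i < n)%nat -> (j < n)%nat -> (k < n)%nat -> c i j k = - c j i k.
Hypothesis Hcent : forall x y, in_center n c (bracket n c x y).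
Variables (g dg dW : R -> vec) (a b t0 : R).
Hypothesis Ht0 : a < t0 < b.
Hypothesis HdW : forall t, a < t < b -> vderiv n (lvel n c g dg) t (dW t).
Hypothesis Hgeod : forall t, a < t < b ->
  veq n (vadd (dW t) (nabla n c (lvel n c g dg t) (lvel n c g dg t))) (fun _ => 0).

Local Notation W := (lvel n c g dg).
Local Notation V0 := (lvel n c g dg t0).

Lemma geodesic_equation t i : a < t < b -> (i < n)%nat ->
  dW t i = - dot n (bracket n c (basis i) (W t)) (W t).
Proof.
  intros Ht Hi. rewrite <- (nabla_self n c Hanti) by exact Hi.
  assert (E := Hgeod t Ht i Hi). unfold vadd in E. lra.
Qed.

(* The central component of W is conserved: for central w,
   <w, W'> = -<[w, W], W> = 0. *)
Lemma center_conserved w : in_center n c w ->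
  forall t, a < t < b -> dot n w (W t) = dot n w V0.
Proof.
  intros Hw. apply (zero_derivative_const (fun t => dot n w (W t)) a b t0 Ht0).
  intros t Ht. eapply deriv_eq; [apply deriv_dot, HdW, Ht|]. unfold dot at 1.
  rewrite (rsum_ext n _ (fun i => - (w i * dot n (bracket n c (basis i) (W t)) (W t))))
    by (intros i Hi; rewrite geodesic_equation by assumption; ring).
  rewrite rsum_opp, <- dot_bracket_expand, dot_zero_l by apply Hw. ring.
Qed.

(* Since brackets are central, the geodesic equation becomes the linear
   equation W' = J(V0) W. *)
Lemma lvel_linear t : a < t < b -> veq n (dW t) (Jmap n c V0 (W t)).
Proof.
  intros Ht i Hi. rewrite geodesic_equation, (dot_bracket_anti n c Hanti), Ropp_involutive
    by assumption.
  apply center_conserved; [apply Hcent|exact Ht].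
Qed.

(* J(V0) is skew, so the speed |W| is constant. *)
Lemma lvel_norm_const t : a < t < b -> vnorm n (W t) = vnorm n V0.
Proof.
  intros Ht. unfold vnorm. f_equal.
  assert (E : forall x, dot n x x = dot n (vsub x (fun _ => 0)) (vsub x (fun _ => 0)))
    by (intros; unfold dot, vsub; apply rsum_ext; intros; ring).
  rewrite (E (W t)), (E V0). apply (sqdist_const n W dW a b t0); [exact Ht0|exact HdW| |exact Ht].
  intros s Hs.
  rewrite (dot_ext n _ _ _ (W s) (lvel_linear s Hs)) by (intros ? ?; unfold vsub; ring).
  apply (Jmap_self n c Hanti).
Qed.

(* If moreover J(V0) V0 = 0, then W' = J(V0)(W - V0) is orthogonal to
   W - V0, so |W - V0| is constant, hence zero. *)
Lemma lvel_constant : veq n (Jmap n c V0 V0) (fun _ => 0) ->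
  forall t, a < t < b -> veq n (W t) V0.
Proof.
  intros HJ t Ht.
  assert (Horth : forall s, a < s < b -> dot n (dW s) (vsub (W s) V0) = 0).
  { intros s Hs.
    rewrite (dot_ext n _ (fun i => 1 * Jmap n c V0 (vsub (W s) V0) i + 1 * Jmap n c V0 V0 i)
               _ (vsub (W s) V0)).
    - rewrite dot_lin_l, (Jmap_self n c Hanti), dot_zero_l by exact HJ. ring.
    - intros i Hi. rewrite <- Jmap_lin, (lvel_linear s Hs i Hi).
      rewrite (Jmap_ext n c V0 V0 (W s) (fun j => 1 * vsub (W s) V0 j + 1 * V0 j));
        [reflexivity|intros ? ?; reflexivity|intros ? ?; unfold vsub; ring].
    - intros ? ?; reflexivity. }
  assert (E := sqdist_const n W dW a b t0 V0 Ht0 HdW Horth t Ht).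
  rewrite (dot_zero_l n (vsub V0 V0)) in E by (intros ? ?; unfold vsub; ring).
  intros i Hi. assert (Ei := dot_self_zero n _ E i Hi). unfold vsub in Ei. lra.
Qed.

(* At a point where W does not vanish, harmonicity of the Gauss map says
   that J(V0)^2 V0 is parallel to V0: with s = |V0| the Gauss map lifts to
   u = W/s, u' = J(V0)W/s, and the tension field at t0 is the component
   of J(V0)^2 V0 / s^3 orthogonal to u(t0) = V0/s. *)
Lemma harmonic_parallel : ~ veq n V0 (fun _ => 0) -> gauss_harmonic_at n c g dg t0 ->
  exists mu, veq n (Jmap n c V0 (Jmap n c V0 V0)) (vscale mu V0).
Proof.
  intros Hnz Hh. unfold gauss_harmonic_at in Hh. cbv beta zeta in Hh.
  destruct Hh as (du & dw & (d & Hd & Hdu) & Hdw & Htan).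
  set (s := vnorm n V0) in *.
  assert (Hs : 0 < s) by (apply vnorm_pos; exact Hnz).
  assert (Hsp : forall t, a < t < b -> vnorm n (W t) = s) by exact lvel_norm_const.
  destruct (interval_nbhd a b t0 Ht0) as (r0 & Hr0 & Hin0).
  set (r := Rmin d r0).
  assert (Hr : 0 < r) by (apply Rmin_pos; assumption).
  assert (Hnear : forall t, Rabs (t - t0) < r -> Rabs (t - t0) < d /\ a < t < b).
  { intros t Ht. assert (r <= d) by apply Rmin_l. assert (r <= r0) by apply Rmin_r.
    split; [lra|apply Hin0; lra]. }
  assert (Hdu' : forall t, Rabs (t - t0) < r ->
                   veq n (du t) (vscale (/ s) (Jmap n c V0 (W t)))).
  { intros t Ht. destruct (Hnear t Ht) as [Htd Htab].
    destruct (interval_nbhd a b t Htab) as (r1 & Hr1 & Hin1).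
    assert (E : veq n (du t) (vscale (/ s) (dW t))).
    { apply (vderiv_unique_near n (fun y => vscale (/ vnorm n (W y)) (W y))
               (fun y => vscale (/ s) (W y)) t _ _ r1 Hr1).
      - intros y Hy i Hi. unfold vscale. rewrite Hsp by (apply Hin1; exact Hy). reflexivity.
      - exact (Hdu t Htd).
      - apply vderiv_scale, HdW, Htab. }
    intros i Hi. rewrite E by exact Hi. unfold vscale. rewrite lvel_linear by assumption.
    reflexivity. }
  set (JJ := Jmap n c V0 (Jmap n c V0 V0)).
  assert (Hdw' : veq n dw (vscale (/ s * / s) JJ)).
  { apply (vderiv_unique_near n (fun t => vscale (/ vnorm n (W t)) (du t))
             (fun t => vscale (/ s * / s) (Jmap n c V0 (W t))) t0 _ _ r Hr).
    - intros y Hy i Hi. destruct (Hnear y Hy) as [_ Hyab].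
      unfold vscale at 1. rewrite Hsp, (Hdu' y Hy i Hi) by exact Hyab. unfold vscale. ring.
    - exact Hdw.
    - apply vderiv_scale. apply (vderiv_veq _ _ _ (Jmap n c V0 (dW t0))).
      + apply vderiv_Jmap, HdW, Ht0.
      + intros i Hi. unfold JJ.
        rewrite (Jmap_ext n c V0 V0 _ _ (fun _ _ => eq_refl) (lvel_linear t0 Ht0)).
        reflexivity. }
  set (m := dot n JJ V0).
  assert (Hdot : dot n dw V0 = / s * / s * m).
  { rewrite (dot_ext n _ _ V0 V0 Hdw' (fun _ _ => eq_refl)). unfold m, dot, vscale.
    rewrite <- rsum_scal. apply rsum_ext; intros; ring. }
  exists (/ (s * s) * m). intros i Hi.
  assert (E := Htan i Hi). unfold vsub in E. rewrite dot_scale, Hdot in E.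
  unfold vscale in E |- *. rewrite (Hdw' i Hi) in E. unfold vscale in E.
  assert (Hs0 : s <> 0) by lra.
  match type of E with ?L = _ =>
    assert (F : JJ i - / (s * s) * m * V0 i = s * s * s * L) by (field; exact Hs0) end.
  rewrite E, Rmult_0_r in F. lra.
Qed.

End Geodesic.

Section ConstantVelocity.
Variables (n : nat) (c : nat -> nat -> nat -> R).
Hypothesis Hanti : forall i j k, (i < n)%nat -> (j < n)%nat -> (k < n)%nat -> c i j k = - c j i k.
Hypothesis Hcent : forall x y, in_center n c (bracket n c x y).
Variables (g dg : R -> vec) (V0 : vec) (a b t0 : R).
Hypothesis Ht0 : a < t0 < b.
Hypothesis Hdg : forall t, a < t < b -> vderiv n g t (dg t).
Hypothesis HW : forall t, a < t < b -> veq n (lvel n c g dg t) V0.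

Lemma velocity_of_lvel t : a < t < b ->
  veq n (dg t) (vadd V0 (vscale (1/2) (bracket n c (g t) V0))).
Proof. intros Ht. apply (dLinv_solve n c Hanti Hcent), HW, Ht. Qed.

(* [g, V0] is constant: its derivative is [V0 + 1/2 [g, V0], V0] = 0. *)
Lemma bracket_velocity_const k : (k < n)%nat -> forall t, a < t < b ->
  bracket n c (g t) V0 k = bracket n c (g t0) V0 k.
Proof.
  intros Hk.
  assert (E : forall x, bracket n c x V0 k = dot n (fun i => bracket n c (basis i) V0 k) x)
    by (intros x; rewrite bracket_expand_l, dot_comm; reflexivity).
  apply (zero_derivative_const (fun s => bracket n c (g s) V0 k) a b t0 Ht0).
  intros t Ht.
  apply (derivable_pt_lim_ext (fun s => dot n (fun i => bracket n c (basis i) V0 k) (g s)));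
    [intros; symmetry; apply E|].
  eapply deriv_eq; [apply deriv_dot, Hdg, Ht|].
  rewrite <- E, (bracket_ext n c (dg t) (fun i => 1 * V0 i + 1/2 * bracket n c (g t) V0 i) V0 V0).
  - rewrite bracket_lin_l, (bracket_self n c Hanti V0 k Hk), (Hcent (g t) V0 V0 k Hk). ring.
  - intros i Hi. rewrite (velocity_of_lvel t Ht i Hi). unfold vadd, vscale. ring.
  - intros ? ?; reflexivity.
Qed.

(* Hence g has constant velocity V0 + 1/2 [g(t0), V0] in coordinates, and
   g(t) = g(t0) + (t - t0) V0 + 1/2 [g(t0), (t - t0) V0]. *)
Lemma constant_lvel_translate t : a < t < b ->
  veq n (g t) (gmul n c (g t0) (vscale (t - t0) V0)).
Proof.
  intros Ht i Hi.
  set (C := V0 i + 1/2 * bracket n c (g t0) V0 i).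
  assert (Hlin : g t i - C * t = g t0 i - C * t0).
  { apply (zero_derivative_const (fun s => g s i - C * s) a b t0 Ht0); [|exact Ht].
    intros s Hs. eapply deriv_eq.
    - apply (derivable_pt_lim_minus (fun s => g s i) (fun s => C * s)); [exact (Hdg s Hs i Hi)|].
      apply (derivable_pt_lim_scal (fun s => s) C s 1), derivable_pt_lim_id.
    - rewrite (velocity_of_lvel s Hs i Hi). unfold vadd, vscale.
      rewrite bracket_velocity_const by assumption. unfold C. ring. }
  assert (Hb := bracket_scale_r n c (t - t0) (g t0) V0 i). unfold vscale in Hb.
  unfold gmul, vadd, vscale. rewrite Hb. unfold C in Hlin. lra.
Qed.

End ConstantVelocity.

Lemma harmonic_geodesic n c g dg a b t0 :
  two_step_nilpotent n c -> a < t0 < b -> is_geodesic n c g dg a b ->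
  ~ veq n (lvel n c g dg t0) (fun _ => 0) -> gauss_harmonic_at n c g dg t0 ->
  veq n (Jmap n c (lvel n c g dg t0) (lvel n c g dg t0)) (fun _ => 0) /\
  forall t, a < t < b ->
    veq n (g t) (gmul n c (g t0) (vscale (t - t0) (lvel n c g dg t0))).
Proof.
  intros [Hanti [Hnil _]] Ht0 [Hdg [dW HdW]] Hnz Hh.
  assert (Hcent : forall x y, in_center n c (bracket n c x y)) by (intros x y w; apply Hnil).
  assert (Hder : forall t, a < t < b -> vderiv n (lvel n c g dg) t (dW t))
    by (intros t Ht; apply HdW, Ht).
  assert (Hgeod := fun t Ht => proj2 (HdW t Ht)).
  destruct (harmonic_parallel n c Hanti Hcent g dg dW a b t0 Ht0 Hder Hgeod Hnz Hh) as [mu Hmu].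
  assert (HJ := Jmap_square_parallel n c Hanti Hcent _ mu Hmu).
  split; [exact HJ|].
  apply (constant_lvel_translate n c Hanti Hcent g dg _ a b t0 Ht0 Hdg).
  exact (lvel_constant n c Hanti Hcent g dg dW a b t0 Ht0 Hder Hgeod HJ).
Qed.

Theorem mainTheorem8 (n : nat) (c : nat -> nat -> nat -> R)
  (hN : two_step_nilpotent n c) :
  (* main statement: geodesic through e = 0 at t = 0 with tangent X + Z *)
  (forall (g dg : R -> vec) (a b : R) (X Z : vec),
     a < 0 < b ->
     is_geodesic n c g dg a b ->
     veq n (g 0) (fun _ => 0) ->
     in_V n c X -> in_center n c Z ->
     veq n (dg 0) (vadd X Z) ->
     ~ veq n (vadd X Z) (fun _ => 0) ->
     gauss_harmonic_at n c g dg 0 ->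
     veq n (Jmap n c Z X) (fun _ => 0) /\
     (forall t, a < t < b -> veq n (g t) (vscale t (vadd X Z))))
  /\
  (* in particular: harmonic at one point => left translate of a
     one-parameter subgroup *)
  (forall (g dg : R -> vec) (a b t0 : R),
     a < t0 < b ->
     is_geodesic n c g dg a b ->
     ~ veq n (dg t0) (fun _ => 0) ->
     gauss_harmonic_at n c g dg t0 ->
     exists Y : vec, forall t, a < t < b ->
       veq n (g t) (gmul n c (g t0) (vscale (t - t0) Y))).
Proof.
  pose proof hN as [Hanti [Hnil _]].
  assert (Hcent : forall x y, in_center n c (bracket n c x y)) by (intros x y w; apply Hnil).
  split.
  - intros g dg a b X Z Hab Hgeo Hg0 HX HZ Hdg0 Hnz Hh.
    assert (HW0 : veq n (lvel n c g dg 0) (vadd X Z)).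
    { intros i Hi. unfold lvel, dLinv, vsub, vscale.
      rewrite bracket_zero_l, Hdg0 by assumption. ring. }
    assert (Hnz' : ~ veq n (lvel n c g dg 0) (fun _ => 0))
      by (intros H; apply Hnz; intros i Hi; rewrite <- (HW0 i Hi); exact (H i Hi)).
    destruct (harmonic_geodesic n c g dg a b 0 hN Hab Hgeo Hnz' Hh) as [HJ Hg].
    split.
    + intros j Hj. rewrite <- (Jmap_V_plus_center n c X Z Hcent HX HZ j Hj).
      rewrite <- (Jmap_ext n c _ _ _ _ HW0 HW0). exact (HJ j Hj).
    + intros t Ht i Hi. rewrite (Hg t Ht i Hi). unfold gmul, vadd, vscale.
      rewrite bracket_zero_l, Hg0, HW0 by assumption. unfold vadd. ring.
  - intros g dg a b t0 Ht0 Hgeo Hnz Hh.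
    exists (lvel n c g dg t0).
    apply (harmonic_geodesic n c g dg a b t0 hN Ht0 Hgeo); [|exact Hh].
    intros H. exact (Hnz (dLinv_kernel n c Hanti Hcent (g t0) (dg t0) H)).
Qed.
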